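(* Let $\langle E,\rightarrow\rangle$ be a computation and $b$ a regular predicate. Every consistent cut in $\mathcal{C}_b(E)$ can be expressed as the union of some subset of the set $\mathcal{J}_b(E)=\{J_b(e)\mid e\in E\}$.
   Context: A computation is a directed graph $\langle E, \rightarrow\rangle$ whose vertices (events) are partitioned among processes, each process having an initial event and a final event; $\top$ denotes the set of final events. A subset $C\subseteq E$ is a consistent cut if for every edge $(u,v)$, $v\in C$ implies $u\in C$; $\emptyset$ and $E$ are trivial. A predicate is regular if whenever consistent cuts $C_1,C_2$ satisfy it, so do $C_1\cap C_2$ and $C_1\cup C_2$. $\mathcal{C}_b(E)$ denotes the set of non-trivial consistent cuts satisfying $b$ together with $\emptyset$ and $E$ (treated as satisfying $b$). For an event $e$, $J_b(e)$ is the least consistent cut of $\langle E,\rightarrow\rangle$ that satisfies $b$ and contains $e$; if none exists or $e\in\top$, $J_b(e)=E$. The union of the empty subset is $\emptyset$. *)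

From mathcomp Require Import all_boot.
Set Implicit Arguments.
Unset Strict Implicit.
Unset Printing Implicit Defensive.

(* A computation <E, ->> : E is a finite set of events, [edge] the directed
   graph, [proc] assigns each event to its (unique) process (this is the
   partition of E among processes), [init p] / [fin p] are the initial and
   final events of process p.  Following the paper's standing conventions
   (Mittal--Garg): the initial event of a process precedes every other event
   of that process, the final event follows every other event of it, all
   initial events lie in one strongly connected component, and so do all
   final events.  "Precedes" is reachability in the graph. *)
Definition computation (E P : finType) (edge : rel E) (proc : E -> P)
    (init fin : P -> E) : Prop :=
  [/\ forall p, proc (init p) = p /\ proc (fin p) = p /\ init p != fin p,
      forall e, connect edge (init (proc e)) e /\ connect edge e (fin (proc e)),
      forall p q, connect edge (init p) (init q) &
      forall p q, connect edge (fin p) (fin q)].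

Definition top_events (E P : finType) (fin : P -> E) : {set E} :=
  [set fin p | p : P].

Definition consistent (E : finType) (edge : rel E) (C : {set E}) : bool :=
  [forall u, forall v, edge u v ==> (v \in C) ==> (u \in C)].

Definition trivial_cut (E : finType) (C : {set E}) : bool :=
  (C == set0) || (C == [set: E]).

(* regular predicate on cuts (predicates are boolean; over a finite event set
   every predicate on cuts is decidable) *)
Definition regular (E : finType) (edge : rel E) (b : pred {set E}) : Prop :=
  forall C1 C2, consistent edge C1 -> consistent edge C2 -> b C1 -> b C2 ->
    b (C1 :&: C2) /\ b (C1 :|: C2).

Definition Cb (E : finType) (edge : rel E) (b : pred {set E}) : {set {set E}} :=
  [set C | (C == set0) || (C == [set: E]) ||
           [&& consistent edge C, ~~ trivial_cut C & b C]].

Definition least_b_cut (E : finType) (edge : rel E) (b : pred {set E})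
    (e : E) (C : {set E}) : bool :=
  [&& consistent edge C, b C, e \in C &
      [forall D, [&& consistent edge D, b D & e \in D] ==> (C \subset D)]].

Definition Jb (E P : finType) (edge : rel E) (fin : P -> E)
    (b : pred {set E}) (e : E) : {set E} :=
  if e \in top_events fin then [set: E]
  else if [pick C | least_b_cut edge b e C] is Some C then C else [set: E].

(* Every event e satisfies e \in J_b(e).  If C is a non-trivial
   consistent cut satisfying b, then C contains no final event (otherwise,
   since all final events are mutually reachable and every event reaches a
   final one, C would be all of E); and for e \in C the consistent b-cuts
   containing e include C and are closed under intersection by regularity,
   so J_b(e) is their intersection and lies inside C.  Hence
   C = \bigcup_(e in C) J_b(e); for C = E this holds since J_b(e) \subset E. *)
From mathcomp Require Import all_boot.

Set Implicit Arguments.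
Unset Strict Implicit.
Unset Printing Implicit Defensive.

Section ConsistentCuts.

Variables (E : finType) (edge : rel E).

Lemma consistentP (C : {set E}) :
  reflect (forall u v, edge u v -> v \in C -> u \in C) (consistent edge C).
Proof.
apply: (iffP forallP) => [cC u v euv vC | cC u].
  by move: (cC u) => /forallP/(_ v); rewrite euv vC.
by apply/forallP => v; apply/implyP => /cC vC; apply/implyP.
Qed.

Lemma consistent_connect (C : {set E}) u v :
  consistent edge C -> connect edge u v -> v \in C -> u \in C.
Proof.
move=> /consistentP cC /connectP [p + ->].
elim: p u => [|w p IH] u //= /andP [euw pth] vC.
exact: cC euw (IH w pth vC).
Qed.

Lemma consistentI (A B : {set E}) :
  consistent edge A -> consistent edge B -> consistent edge (A :&: B).
Proof.
move=> /consistentP cA /consistentP cB; apply/consistentP => u v euv.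
by rewrite !inE => /andP [vA vB]; rewrite (cA u v) ?(cB u v).
Qed.

End ConsistentCuts.

Lemma final_in_cut (E P : finType) (edge : rel E) (proc : E -> P)
    (init fin : P -> E) (C : {set E}) p :
  computation edge proc init fin -> consistent edge C -> fin p \in C ->
  C = [set: E].
Proof.
move=> [_ reach_fin _ fin_scc] cC finC; apply/setP => x; rewrite inE.
apply: (consistent_connect cC (proj2 (reach_fin x))).
exact: consistent_connect cC (fin_scc _ p) finC.
Qed.

Section LeastCut.

Variables (E P : finType) (edge : rel E) (fin : P -> E) (b : pred {set E}).

Lemma mem_Jb e : e \in Jb edge fin b e.
Proof.
rewrite /Jb; case: ifP => _; first by rewrite inE.
by case: pickP => [D /and4P [] | _]; rewrite ?inE.
Qed.

Hypothesis regular_b : regular edge b.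

(* Intersecting with C keeps the index range of the big intersection from
   starting at [set: E], which need not satisfy b. *)
Lemma exists_least_b_cut (C : {set E}) e :
  consistent edge C -> b C -> e \in C -> exists D, least_b_cut edge b e D.
Proof.
move=> cC bC eC.
pose Q D := [&& consistent edge D, b D & e \in D].
exists (C :&: \bigcap_(D | Q D) D); apply/and4P.
have : Q (C :&: \bigcap_(D | Q D) D).
  elim/big_rec: _ => [|D X /and3P [cD bD eD] /and3P [cX bX eX]].
    by rewrite setIT /Q cC bC eC.
  rewrite setIA [C :&: D]setIC -setIA.
  have [bDX _] := regular_b cD cX bD bX.
  by rewrite /Q consistentI // bDX inE eD eX.
case/and3P=> -> -> ->; split=> //; apply/forallP => D; apply/implyP => QD.
by apply: subIset; apply/orP; right; exact: bigcap_inf.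
Qed.

Lemma Jb_sub_cut (C : {set E}) e :
  e \notin top_events fin -> consistent edge C -> b C -> e \in C ->
  Jb edge fin b e \subset C.
Proof.
move=> /negbTE efin cC bC eC; rewrite /Jb efin.
case: pickP => [D /and4P [_ _ _ /forallP /(_ C)] | none].
  by rewrite cC bC eC.
have [D leastD] := exists_least_b_cut cC bC eC.
by move: (none D); rewrite leastD.
Qed.

Lemma Cb_Jb_sub (proc : E -> P) (init : P -> E) (C : {set E}) e :
  computation edge proc init fin -> C \in Cb edge b -> e \in C ->
  Jb edge fin b e \subset C.
Proof.
move=> compE; rewrite inE => /orP [/orP [/eqP -> | /eqP ->] | ]; rewrite ?inE //.
case/and3P=> cC ntC bC eC; apply: Jb_sub_cut => //.
apply/imsetP => -[p _ efin]; move: ntC; rewrite /trivial_cut.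
by rewrite (final_in_cut compE cC (_ : fin p \in C)) ?eqxx ?orbT // -efin.
Qed.

Lemma cut_eq_bigcup_Jb (C : {set E}) :
  (forall e, e \in C -> Jb edge fin b e \subset C) ->
  C = \bigcup_(X in [set Jb edge fin b e | e in C]) X.
Proof.
move=> JbC; apply/setP => x; apply/idP/bigcupP => [xC | [_ /imsetP [e eC ->]]].
  by exists (Jb edge fin b x); [exact: imset_f | exact: mem_Jb].
exact: subsetP (JbC e eC) x.
Qed.

End LeastCut.

Theorem lemma5 (E P : finType) (edge : rel E) (proc : E -> P)
    (init fin : P -> E) (b : pred {set E}) :
  computation edge proc init fin ->
  regular edge b ->
  forall C : {set E}, C \in Cb edge b ->
  exists S : {set {set E}},
    S \subset [set Jb edge fin b e | e : E] /\ C = \bigcup_(X in S) X.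
Proof.
move=> compE regular_b C CbC; exists [set Jb edge fin b e | e in C]; split.
  exact: imsetS (subset_predT C).
by apply: cut_eq_bigcup_Jb => e; apply: (Cb_Jb_sub regular_b compE CbC).
Qed.
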